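(* Let $(\mathcal C,\otimes,I)$ be a closed monoidal category, $M$ a strong monad on $\mathcal C$ with strength $\tau$, and $A$ an object. Then the tuple $\langle MA\Rightarrow MA,\ \Lambda(p),\ \mathsf{comp},\ \mathsf{ident}\rangle$, where $p = \mu_A\circ M\mathsf{app}\circ\tau : M(MA\Rightarrow MA)\otimes MA\to M((MA\Rightarrow MA)\otimes MA)\to MMA\to MA$, is an Eilenberg--Moore $M$-monoid.
   Context: Closed means each functor $(-)\otimes B$ has a right adjoint $B\Rightarrow(-)$; $\Lambda: \mathcal C(X\otimes B,C)\cong\mathcal C(X,B\Rightarrow C)$ denotes currying and $\mathsf{app}:(B\Rightarrow C)\otimes B\to C$ the counit. Structural isomorphisms are written $\cong$. $\mathsf{comp}=\Lambda(k):(B\Rightarrow C)\otimes(X\Rightarrow B)\to(X\Rightarrow C)$ where $k = \mathsf{app}\circ(\mathrm{id}\otimes\mathsf{app})\circ\cong : ((B\Rightarrow C)\otimes(X\Rightarrow B))\otimes X\to C$, and $\mathsf{ident}=\Lambda(I\otimes X\xrightarrow{\cong}X): I\to(X\Rightarrow X)$ (here with $X=B=C=MA$). A strong monad has strength $\tau_{X,Y}: MX\otimes Y\to M(X\otimes Y)$ satisfying the usual coherence laws. An Eilenberg--Moore $M$-monoid is $\langle E,a: ME\to E,m: E\otimes E\to E,u: I\to E\rangle$ with $\langle E,a\rangle$ an Eilenberg--Moore $M$-algebra ($a\circ Ma=a\circ\mu$, $a\circ\eta=\mathrm{id}$), $\langle E,m,u\rangle$ a monoid, and $m\circ(a\otimes\mathrm{id}_E)=a\circ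 Mm\circ\tau_{E,E}$. *)

Set Implicit Arguments.
Unset Strict Implicit.
Set Universe Polymorphism.

Record Category := {
  ob :> Type;
  hom : ob -> ob -> Type;
  idm : forall A, hom A A;
  cmp : forall A B C, hom B C -> hom A B -> hom A C;
  cmp_id_l : forall A B (f : hom A B), cmp (idm B) f = f;
  cmp_id_r : forall A B (f : hom A B), cmp f (idm A) = f;
  cmp_assoc : forall A B C D (h : hom C D) (g : hom B C) (f : hom A B),
      cmp h (cmp g f) = cmp (cmp h g) f
}.
Arguments hom {c} _ _.
Arguments idm {c} A.
Arguments cmp {c A B C} _ _.

Declare Scope cat_scope.
Local Open Scope cat_scope.
Notation "g \o' f" := (cmp g f) (at level 40, left associativity) : cat_scope.

Record Monoidal (C : Category) := {
  tens : C -> C -> C;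
  tensm : forall A A' B B', hom A A' -> hom B B' -> hom (tens A B) (tens A' B');
  tensm_id : forall A B, tensm (idm A) (idm B) = idm (tens A B);
  tensm_comp : forall A A' A'' B B' B'' (f' : hom A' A'') (f : hom A A')
      (g' : hom B' B'') (g : hom B B'),
      tensm (f' \o' f) (g' \o' g) = tensm f' g' \o' tensm f g;
  unitI : C;
  alpha : forall A B D, hom (tens (tens A B) D) (tens A (tens B D));
  alpha_inv : forall A B D, hom (tens A (tens B D)) (tens (tens A B) D);
  alpha_iso1 : forall A B D, alpha_inv A B D \o' alpha A B D = idm _;
  alpha_iso2 : forall A B D, alpha A B D \o' alpha_inv A B D = idm _;
  alpha_nat : forall A A' B B' D D' (f : hom A A') (g : hom B B') (h : hom D D'),
      alpha A' B' D' \o' tensm (tensm f g) h = tensm f (tensm g h) \o' alpha A B D;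
  lam : forall A, hom (tens unitI A) A;
  lam_inv : forall A, hom A (tens unitI A);
  lam_iso1 : forall A, lam_inv A \o' lam A = idm _;
  lam_iso2 : forall A, lam A \o' lam_inv A = idm _;
  lam_nat : forall A A' (f : hom A A'), lam A' \o' tensm (idm unitI) f = f \o' lam A;
  rho : forall A, hom (tens A unitI) A;
  rho_inv : forall A, hom A (tens A unitI);
  rho_iso1 : forall A, rho_inv A \o' rho A = idm _;
  rho_iso2 : forall A, rho A \o' rho_inv A = idm _;
  rho_nat : forall A A' (f : hom A A'), rho A' \o' tensm f (idm unitI) = f \o' rho A;
  pentagon : forall A B D E,
      alpha A B (tens D E) \o' alpha (tens A B) D E
      = tensm (idm A) (alpha B D E) \o' alpha A (tens B D) E
        \o' tensm (alpha A B D) (idm E);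
  triangle : forall A B,
      tensm (idm A) (lam B) \o' alpha A unitI B = tensm (rho A) (idm B)
}.
Arguments tens {C} m _ _.
Arguments tensm {C} m {A A' B B'} _ _.
Arguments unitI {C} m.
Arguments alpha {C} m A B D.
Arguments lam {C} m A.
Arguments rho {C} m A.

(* Closed: each functor (-) (x) B has a right adjoint B => (-), presented by
   the counit ev (= app) and the currying bijection curry (= Lambda). *)
Record Closed (C : Category) (T : Monoidal C) := {
  ihom : C -> C -> C;
  ev : forall B D, hom (tens T (ihom B D) B) D;
  curry : forall X B D, hom (tens T X B) D -> hom X (ihom B D);
  curry_beta : forall X B D (f : hom (tens T X B) D),
      ev B D \o' tensm T (curry f) (idm B) = f;
  curry_eta : forall X B D (g : hom X (ihom B D)),
      curry (ev B D \o' tensm T g (idm B)) = g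
}.
Arguments ihom {C T} c _ _.
Arguments ev {C T} c B D.
Arguments curry {C T} c {X B D} _.

Record StrongMonad (C : Category) (T : Monoidal C) := {
  Mo : C -> C;
  Mf : forall A B, hom A B -> hom (Mo A) (Mo B);
  Mf_id : forall A, Mf (idm A) = idm (Mo A);
  Mf_comp : forall A B D (g : hom B D) (f : hom A B), Mf (g \o' f) = Mf g \o' Mf f;
  eta : forall A, hom A (Mo A);
  mu : forall A, hom (Mo (Mo A)) (Mo A);
  eta_nat : forall A B (f : hom A B), eta B \o' f = Mf f \o' eta A;
  mu_nat : forall A B (f : hom A B), mu B \o' Mf (Mf f) = Mf f \o' mu A;
  mu_assoc : forall A, mu A \o' Mf (mu A) = mu A \o' mu (Mo A);
  mu_eta_l : forall A, mu A \o' eta (Mo A) = idm (Mo A);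
  mu_eta_r : forall A, mu A \o' Mf (eta A) = idm (Mo A);
  tau : forall X Y, hom (tens T (Mo X) Y) (Mo (tens T X Y));
  tau_nat : forall X X' Y Y' (f : hom X X') (g : hom Y Y'),
      tau X' Y' \o' tensm T (Mf f) g = Mf (tensm T f g) \o' tau X Y;
  tau_unit : forall X, Mf (rho T X) \o' tau X (unitI T) = rho T (Mo X);
  tau_assoc : forall X Y Z,
      tau X (tens T Y Z) \o' alpha T (Mo X) Y Z
      = Mf (alpha T X Y Z) \o' tau (tens T X Y) Z \o' tensm T (tau X Y) (idm Z);
  tau_eta : forall X Y, tau X Y \o' tensm T (eta X) (idm Y) = eta (tens T X Y);
  tau_mu : forall X Y,
      tau X Y \o' tensm T (mu X) (idm Y) = mu (tens T X Y) \o' Mf (tau X Y) \o' tau (Mo X) Y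
}.
Arguments Mo {C T} s _.
Arguments Mf {C T} s {A B} _.
Arguments eta {C T} s A.
Arguments mu {C T} s A.
Arguments tau {C T} s X Y.

Definition is_EM_monoid (C : Category) (T : Monoidal C) (M : StrongMonad T)
    (E : C) (a : hom (Mo M E) E) (m : hom (tens T E E) E) (u : hom (unitI T) E) : Prop :=
  (a \o' Mf M a = a \o' mu M E /\ a \o' eta M E = idm E) /\
  (m \o' tensm T m (idm E) = m \o' tensm T (idm E) m \o' alpha T E E E /\
   m \o' tensm T u (idm E) = lam T E /\
   m \o' tensm T (idm E) u = rho T E) /\
  m \o' tensm T a (idm E) = a \o' Mf M m \o' tau M E E.

Definition comp_map (C : Category) (T : Monoidal C) (Cl : Closed T) (X B D : C)
  : hom (tens T (ihom Cl B D) (ihom Cl X B)) (ihom Cl X D) :=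
  curry Cl (ev Cl B D \o' tensm T (idm (ihom Cl B D)) (ev Cl X B)
            \o' alpha T (ihom Cl B D) (ihom Cl X B) X).

Definition ident_map (C : Category) (T : Monoidal C) (Cl : Closed T) (X : C)
  : hom (unitI T) (ihom Cl X X) := curry Cl (lam T X).

Definition p_map (C : Category) (T : Monoidal C) (Cl : Closed T) (M : StrongMonad T) (A : C)
  : hom (tens T (Mo M (ihom Cl (Mo M A) (Mo M A))) (Mo M A)) (Mo M A) :=
  mu M A \o' Mf M (ev Cl (Mo M A) (Mo M A)) \o' tau M (ihom Cl (Mo M A) (Mo M A)) (Mo M A).
Arguments is_EM_monoid {C T} M E a m u.
Arguments comp_map {C T} Cl X B D.
Arguments ident_map {C T} Cl X.
Arguments p_map {C T} Cl M A.

(* Internal composition and identities make the internal homs a category enriched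
   over C, so [[MA, MA]] is a monoid. Any [[B, MA]] carries the pointwise algebra
   structure [Lambda(mu o M app o tau)]; since maps into an internal hom are
   determined by their composite with [app], each law reduces to one of the monad
   and strength laws, compatibility with composition being the associativity of
   the strength. *)
From Corelib Require Import ssreflect.
Local Open Scope cat_scope.

Lemma cmp_prefix_eq {C : Category} {A B D E : C} {x : hom B D} {y : hom A B}
    {z : hom A D} (xyE : x \o' y = z) (w : hom E A) :
  x \o' (y \o' w) = z \o' w.
Proof. by rewrite cmp_assoc xyE. Qed.

Lemma split_epi_cancel {C : Category} {A B D : C} (f h : hom B D) (g : hom A B)
    (g' : hom B A) :
  g \o' g' = idm B -> f \o' g = h \o' g -> f = h.
Proof.
by move=> gg' fgE; rewrite -(cmp_id_r f) -(cmp_id_r h) -gg' !cmp_assoc fgE.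
Qed.

(* Morphisms are kept right-associated; [crewrite L] rewrites with [L : x \o' y = z]
   also where [x \o' y] is a prefix of such a chain. *)
Ltac reassoc := repeat rewrite -cmp_assoc.
Ltac crewrite L :=
  first [rewrite (cmp_prefix_eq L) | rewrite L]; reassoc.
Ltac crewrite_rev L :=
  first [rewrite (cmp_prefix_eq (eq_sym L)) | rewrite -L]; reassoc.

Section MonoidalFacts.
Context {C : Category} (T : Monoidal C).

Lemma tensm_compl {A A' A'' B : C} (f' : hom A' A'') (f : hom A A') :
  tensm T (f' \o' f) (idm B) = tensm T f' (idm B) \o' tensm T f (idm B).
Proof. by rewrite -tensm_comp cmp_id_l. Qed.

Lemma tensm_compr {A B B' B'' : C} (g' : hom B' B'') (g : hom B B') :
  tensm T (idm A) (g' \o' g) = tensm T (idm A) g' \o' tensm T (idm A) g.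
Proof. by rewrite -tensm_comp cmp_id_l. Qed.

Lemma tensm_interchange {A A' B B' : C} (f : hom A A') (g : hom B B') :
  tensm T f (idm B') \o' tensm T (idm A) g = tensm T (idm A') g \o' tensm T f (idm B).
Proof. by rewrite -!tensm_comp !cmp_id_l !cmp_id_r. Qed.

Lemma tensm_unitI_inj {A B : C} (f g : hom A B) :
  tensm T (idm (unitI T)) f = tensm T (idm (unitI T)) g -> f = g.
Proof.
have conj_lam (h : hom A B) :
    h = lam T B \o' tensm T (idm (unitI T)) h \o' lam_inv T A.
  by rewrite lam_nat -cmp_assoc lam_iso2 cmp_id_r.
by move=> fgE; rewrite (conj_lam f) (conj_lam g) fgE.
Qed.

(* Kelly's lemma: the left-unitor instance of the triangle axiom is redundant. *)
Lemma lam_alpha (A B : C) :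
  lam T (tens T A B) \o' alpha T (unitI T) A B = tensm T (lam T A) (idm B).
Proof.
apply: tensm_unitI_inj.
set I := unitI T.
set pent := alpha T I (tens T I A) B \o' tensm T (alpha T I I A) (idm B).
apply: (split_epi_cancel _ _ pent
  (tensm T (alpha_inv T I I A) (idm B) \o' alpha_inv T I (tens T I A) B)).
  by rewrite /pent -cmp_assoc (cmp_assoc (tensm T _ _)) -tensm_compl
             alpha_iso2 tensm_id cmp_id_l alpha_iso2.
(* Precomposed with [pent], both sides reduce to [alpha o ((rho (x) id) (x) id)]:
   the left one by the pentagon and a triangle, the right one by a triangle. *)
rewrite /pent tensm_compr; reassoc.
have pent_r := pentagon T I I A B; rewrite -cmp_assoc in pent_r.
rewrite -pent_r.
crewrite (triangle T I (tens T A B)).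
rewrite -(tensm_id T A B).
crewrite_rev (alpha_nat T (rho T I) (idm A) (idm B)).
rewrite -(triangle T I A) tensm_compl; reassoc.
by crewrite (alpha_nat T (idm I) (lam T A) (idm B)).
Qed.

End MonoidalFacts.

Section ClosedFacts.
Context {C : Category} {T : Monoidal C} (Cl : Closed T).

Lemma ihom_ext {X B D : C} (g h : hom X (ihom Cl B D)) :
  ev Cl B D \o' tensm T g (idm B) = ev Cl B D \o' tensm T h (idm B) -> g = h.
Proof. by move=> ghE; rewrite -(curry_eta g) -(curry_eta h) ghE. Qed.

Lemma ev_comp_map (X B D : C) :
  ev Cl X D \o' tensm T (comp_map Cl X B D) (idm X)
  = ev Cl B D \o' (tensm T (idm (ihom Cl B D)) (ev Cl X B)
                   \o' alpha T (ihom Cl B D) (ihom Cl X B) X).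
Proof. by rewrite /comp_map curry_beta cmp_assoc. Qed.

Lemma comp_mapA (W X Y Z : C) :
  comp_map Cl W X Z \o' tensm T (comp_map Cl X Y Z) (idm (ihom Cl W X))
  = comp_map Cl W Y Z \o' tensm T (idm (ihom Cl Y Z)) (comp_map Cl W X Y)
    \o' alpha T (ihom Cl Y Z) (ihom Cl X Y) (ihom Cl W X).
Proof.
apply: ihom_ext; rewrite !tensm_compl; reassoc.
crewrite (ev_comp_map W X Z).
crewrite (alpha_nat T (comp_map Cl X Y Z) (idm (ihom Cl W X)) (idm W)).
rewrite tensm_id.
crewrite_rev (tensm_interchange T (comp_map Cl X Y Z) (ev Cl W X)).
crewrite (ev_comp_map X Y Z).
crewrite (ev_comp_map W Y Z).
crewrite (alpha_nat T (idm (ihom Cl Y Z)) (comp_map Cl W X Y) (idm W)).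
crewrite_rev (tensm_compr T (A := ihom Cl Y Z) (ev Cl W Y)
                (tensm T (comp_map Cl W X Y) (idm W))).
rewrite ev_comp_map !tensm_compr; reassoc.
have pent_r := pentagon T (ihom Cl Y Z) (ihom Cl X Y) (ihom Cl W X) W.
rewrite -cmp_assoc in pent_r; rewrite -pent_r.
rewrite -(tensm_id T (ihom Cl Y Z) (ihom Cl X Y)).
by crewrite (alpha_nat T (idm (ihom Cl Y Z)) (idm (ihom Cl X Y)) (ev Cl W X)).
Qed.

Lemma comp_map1l (X Y : C) :
  comp_map Cl X Y Y \o' tensm T (ident_map Cl Y) (idm (ihom Cl X Y))
  = lam T (ihom Cl X Y).
Proof.
apply: ihom_ext; rewrite !tensm_compl; reassoc.
crewrite (ev_comp_map X Y Y).
crewrite (alpha_nat T (ident_map Cl Y) (idm (ihom Cl X Y)) (idm X)).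
rewrite tensm_id.
crewrite_rev (tensm_interchange T (ident_map Cl Y) (ev Cl X Y)).
crewrite (curry_beta Cl (lam T Y)).
crewrite (lam_nat T (ev Cl X Y)).
by rewrite lam_alpha.
Qed.

Lemma comp_map1r (X Y : C) :
  comp_map Cl X X Y \o' tensm T (idm (ihom Cl X Y)) (ident_map Cl X)
  = rho T (ihom Cl X Y).
Proof.
apply: ihom_ext; rewrite !tensm_compl; reassoc.
crewrite (ev_comp_map X X Y).
crewrite (alpha_nat T (idm (ihom Cl X Y)) (ident_map Cl X) (idm X)).
crewrite_rev (tensm_compr T (A := ihom Cl X Y) (ev Cl X X)
                (tensm T (ident_map Cl X) (idm X))).
by rewrite (curry_beta Cl (lam T X)) triangle.
Qed.

End ClosedFacts.

Section StrongMonadFacts.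
Context {C : Category} {T : Monoidal C} (Cl : Closed T) (M : StrongMonad T).

Lemma tau_natr {X Y Y' : C} (g : hom Y Y') :
  tau M X Y' \o' tensm T (idm (Mo M X)) g = Mf M (tensm T (idm X) g) \o' tau M X Y.
Proof. by rewrite -tau_nat Mf_id. Qed.

Definition ihom_alg (B A : C) : hom (Mo M (ihom Cl B (Mo M A))) (ihom Cl B (Mo M A)) :=
  curry Cl (mu M A \o' Mf M (ev Cl B (Mo M A)) \o' tau M (ihom Cl B (Mo M A)) B).

Lemma ev_ihom_alg (B A : C) :
  ev Cl B (Mo M A) \o' tensm T (ihom_alg B A) (idm B)
  = mu M A \o' (Mf M (ev Cl B (Mo M A)) \o' tau M (ihom Cl B (Mo M A)) B).
Proof. by rewrite curry_beta cmp_assoc. Qed.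

Lemma ihom_alg_mu (B A : C) :
  ihom_alg B A \o' Mf M (ihom_alg B A) = ihom_alg B A \o' mu M (ihom Cl B (Mo M A)).
Proof.
apply: (ihom_ext Cl); rewrite !tensm_compl; reassoc.
crewrite (ev_ihom_alg B A); crewrite (ev_ihom_alg B A).
crewrite (tau_nat M (ihom_alg B A) (idm B)).
crewrite_rev (Mf_comp M (ev Cl B (Mo M A)) (tensm T (ihom_alg B A) (idm B))).
rewrite ev_ihom_alg !Mf_comp; reassoc.
crewrite (tau_mu M).
crewrite_rev (mu_nat M (ev Cl B (Mo M A))).
by crewrite_rev (mu_assoc M A).
Qed.

Lemma ihom_alg_eta (B A : C) :
  ihom_alg B A \o' eta M (ihom Cl B (Mo M A)) = idm (ihom Cl B (Mo M A)).
Proof.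
apply: (ihom_ext Cl); rewrite tensm_id cmp_id_r !tensm_compl; reassoc.
crewrite (ev_ihom_alg B A).
crewrite (tau_eta M).
crewrite_rev (eta_nat M (ev Cl B (Mo M A))).
by crewrite (mu_eta_l M A); rewrite cmp_id_l.
Qed.

Lemma comp_map_ihom_alg (B B' A : C) :
  comp_map Cl B B' (Mo M A) \o' tensm T (ihom_alg B' A) (idm (ihom Cl B B'))
  = ihom_alg B A \o' Mf M (comp_map Cl B B' (Mo M A))
    \o' tau M (ihom Cl B' (Mo M A)) (ihom Cl B B').
Proof.
apply: (ihom_ext Cl); rewrite !tensm_compl; reassoc.
crewrite (ev_comp_map Cl B B' (Mo M A)).
crewrite (alpha_nat T (ihom_alg B' A) (idm (ihom Cl B B')) (idm B)).
rewrite tensm_id.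
crewrite_rev (tensm_interchange T (ihom_alg B' A) (ev Cl B B')).
crewrite (ev_ihom_alg B' A); crewrite (ev_ihom_alg B A).
crewrite (tau_natr (X := ihom Cl B' (Mo M A)) (ev Cl B B')).
crewrite (tau_assoc M).
crewrite (tau_nat M (comp_map Cl B B' (Mo M A)) (idm B)).
crewrite_rev (Mf_comp M (ev Cl B (Mo M A))
                (tensm T (comp_map Cl B B' (Mo M A)) (idm B))).
by rewrite ev_comp_map !Mf_comp; reassoc.
Qed.

End StrongMonadFacts.

Theorem theorem15 (C : Category) (T : Monoidal C) (Cl : Closed T)
    (M : StrongMonad T) (A : C) :
  is_EM_monoid M (ihom Cl (Mo M A) (Mo M A))
    (curry Cl (p_map Cl M A))
    (comp_map Cl (Mo M A) (Mo M A) (Mo M A))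
    (ident_map Cl (Mo M A)).
Proof.
have -> : curry Cl (p_map Cl M A) = ihom_alg Cl M (Mo M A) A by [].
split; [split | split; [split; [| split] |]].
- exact: ihom_alg_mu.
- exact: ihom_alg_eta.
- exact: comp_mapA.
- exact: comp_map1l.
- exact: comp_map1r.
- exact: comp_map_ihom_alg.
Qed.
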